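(* Let $n\ge4$. The number of friendship parking functions for the cycle graph $C_n$ is $$|\mathrm{FPF}(C_n)| = n+1+\sum_{i=1}^{n-2}(i+1)(i+2)+\sum_{i=1}^{3}(n+1-i)!\,(i-1)!+\sum_{i=4}^{n}\frac{(n-i+1)!\,i!}{3}.$$
   Context: $C_n$ is the cycle graph with vertex set $[n]=\{1,\dots,n\}$ and edges $\{i,i+1\}$ for $i\in[n-1]$ and $\{n,1\}$. Friendship parking process for a graph $G$ on $[n]$ and a parking preference $p\in[n]^n$: cars $1,\dots,n$ enter in order into spots $1,\dots,n$ (initially empty); spot $k$ is available for car $i$ if it is unoccupied when $i$ enters and each of spots $k-1,k+1$ is unoccupied or occupied by a car adjacent to $i$ in $G$ (spots $0,n+1$ count as unoccupied); car $i$ parks in the first available spot $k\ge p_i$, and fails to park if there is none. $\mathrm{FPF}(G)$ is the set of parking preferences for which all $n$ cars park. *)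

From mathcomp Require Import all_boot.
Set Implicit Arguments. Unset Strict Implicit. Unset Printing Implicit Defensive.

(* Cars and spots are numbered 1..n.  A graph G on [n] is a relation on nat
   (only its values on 1..n matter).  A parking state is a sequence [occ] of
   length n: spot k (1 <= k <= n) is stored at index k-1, with value None
   (unoccupied) or Some c (occupied by car c). *)

Definition cycle_adj (n : nat) : rel nat := fun i j =>
  [&& 1 <= i <= n, 1 <= j <= n &
   [|| j == i.+1, i == j.+1, (i == n) && (j == 1) | (i == 1) && (j == n)]].

Definition spot_ok (G : rel nat) (n : nat) (occ : seq (option nat)) (i j : nat) : bool :=
  [|| j == 0, j == n.+1 |
      match nth None occ j.-1 with None => true | Some c => G i c end].

Definition available (G : rel nat) (n : nat) (occ : seq (option nat)) (i k : nat) : bool :=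
  [&& 1 <= k <= n, nth None occ k.-1 == None,
      spot_ok G n occ i k.-1 & spot_ok G n occ i k.+1].

Definition park_car (G : rel nat) (n : nat) (occ : seq (option nat)) (i pi : nat)
  : option (seq (option nat)) :=
  match ohead [seq k <- iota pi (n.+1 - pi) | available G n occ i k] with
  | Some k => Some (set_nth None occ k.-1 (Some i))
  | None => None
  end.

Definition run_parking (G : rel nat) (n : nat) (pref : nat -> nat) : option (seq (option nat)) :=
  foldl (fun o i => obind (fun occ => park_car G n occ i (pref i)) o)
        (Some (nseq n None)) (iota 1 n).

Definition all_park (G : rel nat) (n : nat) (pref : nat -> nat) : bool :=
  run_parking G n pref != None.

(* A parking preference p in [n]^n is encoded as p : n.-tuple 'I_n, the
   preference of car i (1 <= i <= n) being (p_{i-1} : nat) + 1. *)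
Definition pref_of (n : nat) (p : n.-tuple 'I_n) : nat -> nat :=
  fun i => (nth 0 (map val p) i.-1).+1.

Definition FPF (G : rel nat) (n : nat) : {set n.-tuple 'I_n} :=
  [set p : n.-tuple 'I_n | all_park G n (pref_of p)].

(* In a successful run every car ends up next to friends only, so the final state lists
   the vertices of C_n along a Hamiltonian path: one of the n rotations of 1..n read
   upwards or downwards.  Car j meets the final state restricted to the cars below j, so
   the preferences leading to a given final state are counted by a product over j of the
   number of preferences sending car j to its final spot s, namely s - L for L the
   nearest spot below s available to j.  For the upward rotation starting with car a
   these factors are 1, 2, 4, 5, ..., a for the cars below a and 1, 2, ..., n + 1 - a for
   the others, giving (a!/3) (n + 1 - a)! when a >= 3; for the downward rotation starting
   with car b all factors are 1 except those of cars n - 1 and n, giving (b + 1) (b + 2)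
   when b <= n - 2. *)

From mathcomp Require Import all_boot zify.
Set Implicit Arguments. Unset Strict Implicit. Unset Printing Implicit Defensive.

Lemma big_tuple_cons (R : Type) (idx : R) (op : Monoid.com_law idx) (T : finType) m
    (F : m.+1.-tuple T -> R) :
  \big[op/idx]_(t : m.+1.-tuple T) F t =
  \big[op/idx]_(x : T) \big[op/idx]_(t : m.-tuple T) F [tuple of x :: t].
Proof.
rewrite pair_big /=.
pose cons_tuple (p : T * m.-tuple T) : m.+1.-tuple T := [tuple of p.1 :: p.2].
rewrite (reindex cons_tuple) //=.
exists (fun t : m.+1.-tuple T => (thead t, [tuple of behead t])) => [[x t]|t] _ /=.
  by congr pair; apply: val_inj.
by apply: val_inj; rewrite /= [t in RHS](tuple_eta t).
Qed.

Lemma big_tuple0 (R : Type) (idx : R) (op : Monoid.law idx) (T : finType)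
    (F : 0.-tuple T -> R) :
  \big[op/idx]_(t : 0.-tuple T) F t = F [tuple].
Proof. by rewrite (big_pred1 [tuple]) // => t; rewrite [t]tuple0; apply/esym/eqP. Qed.

Lemma set_nth_nth (T : Type) (x0 : T) s i : i < size s -> set_nth x0 s i (nth x0 s i) = s.
Proof.
move=> hi; apply: (@eq_from_nth _ x0) => [|k _]; first by rewrite size_set_nth; lia.
by rewrite nth_set_nth /=; case: eqP => [->|].
Qed.

Lemma ohead_filter_iotaP (A : pred nat) q m s :
  ohead [seq k <- iota q m | A k] = Some s <->
  [/\ q <= s < q + m, A s & forall k, q <= k < s -> ~~ A k].
Proof.
elim: m q => [|m IH] q /=; first by split => //; case; lia.
case: ifP => Aq /=.
  split=> [[<-]|[hs As notA]]; first by split => //; [lia | move=> k; lia].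
  case: (ltngtP q s) => [qs|sq|->//]; last lia.
  by move: (notA q); rewrite Aq; lia.
rewrite IH; split=> [[hs As notA]|[hs As notA]]; split => //.
- by have [eqs|] := eqVneq q s; [rewrite -eqs Aq in As | lia].
- by move=> k hk; have [->|] := eqVneq k q; [rewrite Aq | move=> ?; apply: notA; lia].
- by have [eqs|] := eqVneq q s; [rewrite -eqs Aq in As | lia].
- by move=> k hk; apply: notA; lia.
Qed.

Lemma sum_ord_range n L s : s <= n -> L <= s -> \sum_(x < n) (L <= x < s : nat) = s - L.
Proof.
move=> hs hL; suff -> : forall m, \sum_(x < m) (L <= x < s : nat) = minn m s - minn m L by lia.
elim=> [|m IH]; first by rewrite big_ord0; lia.
by rewrite big_ord_recr /= IH; case: (leqP L m) => h1; case: (ltnP m s) => h2 /=; lia.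
Qed.

Lemma option_indicator_sum (T : eqType) (r : option T) (S : seq T) :
  uniq S -> (forall f, r = Some f -> f \in S) ->
  (r != None : nat) = \sum_(f <- S) (r == Some f : nat).
Proof.
move=> uS; case: r => [f /(_ f erefl) fS|_] /=; last by rewrite big1.
rewrite (eq_bigr (fun g => if g == f then 1 else 0)) => [|g _]; last first.
  by rewrite (inj_eq Some_inj) eq_sym; case: eqP.
by rewrite -big_mkcond sum1_count count_uniq_mem // fS.
Qed.

(* The preferences x + 1 whose first A-spot is s are exactly those in (L, s]. *)
Lemma count_first_at (A : pred nat) n s L :
  s <= n -> A s -> L < s -> (L = 0 \/ A L) -> (forall k, L < k < s -> ~~ A k) ->
  \sum_(x < n) (ohead [seq k <- iota x.+1 (n.+1 - x.+1) | A k] == Some s : nat) = s - L.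
Proof.
move=> hs As hL AL notA; rewrite -(@sum_ord_range n L s) ?(ltnW hL) //.
apply: eq_bigr => -[x hx] _ /=; case: (boolP (L <= x < s)) => hx'.
  suff /ohead_filter_iotaP -> : [/\ x.+1 <= s < x.+1 + (n.+1 - x.+1), A s &
      forall k, x.+1 <= k < s -> ~~ A k] by rewrite eqxx.
  by split=> // [|k hk]; [lia | apply: notA; lia].
case: eqP => // /ohead_filter_iotaP [hxs _ notA'].
case: AL => [|AL]; first lia.
by move: (notA' L); rewrite AL; lia.
Qed.

Section FriendshipParking.
Variables (G : rel nat) (n : nat).

Fixpoint run_from (occ : seq (option nat)) (i : nat) (s : seq nat) :
    option (seq (option nat)) :=
  if s is q :: s' then obind (fun o => run_from o i.+1 s') (park_car G n occ i q)
  else Some occ.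

Lemma foldl_park_iotaE (pref : nat -> nat) m occ i :
  foldl (fun o i => obind (fun occ => park_car G n occ i (pref i)) o) (Some occ) (iota i m)
  = run_from occ i [seq pref j | j <- iota i m].
Proof.
have foldl_None l :
  foldl (fun o i => obind (fun occ => park_car G n occ i (pref i)) o) None l = None.
  by elim: l.
elim: m occ i => [//|m IH] occ i /=.
by case: park_car => [o|] /=; [apply: IH | apply: foldl_None].
Qed.

Definition pref_val (x : 'I_n) : nat := x.+1.

Lemma run_parkingE (p : n.-tuple 'I_n) :
  run_parking G n (pref_of p) = run_from (nseq n None) 1 (map pref_val p).
Proof.
rewrite /run_parking foldl_park_iotaE; congr run_from.
rewrite -(addn0 1) iotaDl -map_comp /pref_of /=.
have -> : map pref_val p = map succn (map val p) by rewrite -map_comp.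
rewrite -[in RHS](mkseq_nth 0 (map val p)) size_map size_tuple /mkseq -map_comp.
exact: eq_map.
Qed.

Lemma card_FPF_run :
  #|FPF G n| = \sum_(t : n.-tuple 'I_n) (run_from (nseq n None) 1 (map pref_val t) != None : nat).
Proof.
rewrite /FPF cardsE -sum1_card big_mkcond /=.
by apply: eq_bigr => t _; rewrite unfold_in /all_park run_parkingE; case: run_from.
Qed.

Lemma park_carP occ i q o : park_car G n occ i q = Some o ->
  exists2 k, available G n occ i k & q <= k /\ o = set_nth None occ k.-1 (Some i).
Proof.
rewrite /park_car; case E: ohead => [k|] // [<-].
move/ohead_filter_iotaP: E => [hk Ak _]; exists k => //; split => //; lia.
Qed.

(* The state met by car j in a run ending in the state occ. *)
Definition cars_below (j : nat) (occ : seq (option nat)) : seq (option nat) :=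
  [seq if o is Some c then (if c < j then Some c else None) else None | o <- occ].

Lemma size_cars_below j occ : size (cars_below j occ) = size occ.
Proof. exact: size_map. Qed.

Lemma nth_cars_below j occ k : nth None (cars_below j occ) k =
  if nth None occ k is Some c then (if c < j then Some c else None) else None.
Proof.
by case: (ltnP k (size occ)) => hk; [rewrite (nth_map None) | rewrite !nth_default ?size_map].
Qed.

Lemma cars_below_cars_below j j' occ : cars_below j (cars_below j' occ) = cars_below (minn j j') occ.
Proof.
rewrite /cars_below -map_comp; apply: eq_map => -[c|] //=.
by case: (ltnP c j') => hc /=; do ![case: ifP => //]; lia.
Qed.

Lemma cars_below_set_nth j occ k c :
  cars_below j (set_nth None occ k (Some c)) =
  set_nth None (cars_below j occ) k (if c < j then Some c else None).
Proof.
apply: (@eq_from_nth _ None) => [|m _]; first by rewrite !(size_set_nth, size_cars_below).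
by rewrite nth_cars_below !nth_set_nth /=; case: eqP => // _; rewrite nth_cars_below.
Qed.

Lemma park_car_cars_below occ j q o :
  size occ = n -> cars_below j occ = occ -> park_car G n occ j q = Some o ->
  [/\ size o = n, cars_below j.+1 o = o & cars_below j o = occ].
Proof.
move=> hs hocc /park_carP [k /and4P [hk /eqP hnone _ _] [_ ->]].
have hk' : k.-1 < size occ by lia.
split.
- by rewrite size_set_nth; lia.
- rewrite cars_below_set_nth ltnSn -{1}hocc cars_below_cars_below.
  by rewrite (minn_idPr (leqnSn j)) hocc.
- by rewrite cars_below_set_nth ltnn hocc -[X in set_nth _ _ _ X]hnone set_nth_nth.
Qed.

Lemma run_from_cars_below s j occ f :
  size occ = n -> cars_below j occ = occ -> run_from occ j s = Some f -> cars_below j f = occ.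
Proof.
elim: s j occ => [|q s IH] j occ hs hocc /=; first by case=> <-.
case E: park_car => [o|] //= ho.
have [hso ho1 ho2] := park_car_cars_below hs hocc E.
by rewrite -ho2 -(IH _ _ hso ho1 ho) cars_below_cars_below (minn_idPl (leqnSn j)).
Qed.

Definition park_weight (f : seq (option nat)) (j : nat) : nat :=
  \sum_(x : 'I_n) (park_car G n (cars_below j f) j (pref_val x) == Some (cars_below j.+1 f)).

Lemma run_from_consE f j q s : size f = n ->
  (run_from (cars_below j f) j (q :: s) == Some f) =
  (park_car G n (cars_below j f) j q == Some (cars_below j.+1 f)) &&
  (run_from (cars_below j.+1 f) j.+1 s == Some f).
Proof.
move=> hf /=; case E: park_car => [o|] //=.
have hsize : size (cars_below j f) = n by rewrite size_cars_below.
have hidem : cars_below j (cars_below j f) = cars_below j f by rewrite cars_below_cars_below minnn.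
have [hso ho1 _] := park_car_cars_below hsize hidem E.
have [ho|ho] := eqVneq (run_from o j.+1 s) (Some f).
  by rewrite (run_from_cars_below hso ho1 ho) ho !eqxx.
by apply/esym/andP => -[/eqP [ho']]; rewrite -ho' (negPf ho).
Qed.

(* Runs ending in f factor car by car, since car j always meets cars_below j f. *)
Lemma count_run_from f m i : size f = n -> cars_below n.+1 f = f -> i + m = n.+1 ->
  \sum_(t : m.-tuple 'I_n) (run_from (cars_below i f) i (map pref_val t) == Some f : nat)
  = \prod_(i <= j < n.+1) park_weight f j.
Proof.
move=> hf hfn; elim: m i => [|m IH] i hi.
  by rewrite addn0 in hi; rewrite big_tuple0 big_geq hi //= hfn eqxx.
rewrite big_tuple_cons big_ltn; last lia.
rewrite -(IH i.+1) ?addSnnS // /park_weight big_distrl /=; apply: eq_bigr => x _.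
by rewrite big_distrr /=; apply: eq_bigr => t _; rewrite run_from_consE // mulnb.
Qed.

Definition config (F : nat -> nat) : seq (option nat) := mkseq (fun k => Some (F k.+1)) n.

Lemma size_config F : size (config F) = n.
Proof. exact: size_mkseq. Qed.

Lemma nth_config F k : nth None (config F) k = if k < n then Some (F k.+1) else None.
Proof. by case: ltnP => hk; [rewrite nth_mkseq | rewrite nth_default ?size_mkseq]. Qed.

Lemma config_inj F F' : config F = config F' -> forall k, 0 < k <= n -> F k = F' k.
Proof.
move=> eqF [//|k] /andP [_ hk].
by move: (congr1 (nth None ^~ k) eqF); rewrite !nth_config hk => -[].
Qed.

Lemma nth_cars_below_config F j k : nth None (cars_below j (config F)) k =
  if (k < n) && (F k.+1 < j) then Some (F k.+1) else None.
Proof. by rewrite nth_cars_below nth_config; case: ifP => //= _; case: ifP. Qed.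

Lemma count_run_config F : (forall k, 0 < k <= n -> 0 < F k <= n) ->
  \sum_(t : n.-tuple 'I_n) (run_from (nseq n None) 1 (map pref_val t) == Some (config F) : nat)
  = \prod_(1 <= j < n.+1) park_weight (config F) j.
Proof.
move=> hF; have -> : nseq n None = cars_below 1 (config F).
  apply: (@eq_from_nth _ None) => [|k]; first by rewrite size_nseq size_cars_below size_config.
  rewrite size_nseq nth_nseq nth_cars_below_config => hk; rewrite hk /=.
  by case: ltnP => // hF0; have := hF k.+1; lia.
apply: count_run_from; rewrite ?size_config //.
apply: (@eq_from_nth _ None) => [|k _]; first by rewrite size_cars_below.
rewrite nth_cars_below_config nth_config.
by case: ifP => // hk; case: ifP => // hkn; move: hk; have := hF k.+1; lia.
Qed.

Lemma available_configE F j k :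
  available G n (cars_below j (config F)) j k =
  [&& 0 < k <= n, j <= F k,
      [|| k == 1, j <= F k.-1 | G j (F k.-1)] &
      [|| k == n, j <= F k.+1 | G j (F k.+1)]].
Proof.
rewrite /available /spot_ok !nth_cars_below_config.
case: k => [|[|k]] /=; repeat (case: ifP => ? /=); apply/idP/idP; lia.
Qed.

End FriendshipParking.

Section ConfigWeight.
Variables (G : rel nat) (n : nat) (F : nat -> nat) (j s : nat).
Hypotheses (hs : 0 < s <= n) (hFs : F s = j) (hFj : forall k, 0 < k <= n -> F k = j -> k = s).

Lemma park_car_configE q :
  (park_car G n (cars_below j (config n F)) j q == Some (cars_below j.+1 (config n F))) =
  (ohead [seq k <- iota q (n.+1 - q) | available G n (cars_below j (config n F)) j k] == Some s).
Proof.
rewrite /park_car; case E: ohead => [k|] //=; rewrite !(inj_eq Some_inj).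
move/ohead_filter_iotaP: E => [_ + _]; rewrite available_configE => /and4P [hk hjk _ _].
apply/eqP/eqP => [eqcfg|->].
  have ek : k.-1.+1 = k by lia.
  move: (congr1 (nth None ^~ k.-1) eqcfg); rewrite nth_set_nth /= eqxx nth_cars_below_config ek.
  by case: ifP => // _ [/esym]; apply: hFj.
apply: (@eq_from_nth _ None) => [|m _].
  by rewrite size_set_nth !size_cars_below size_config; lia.
rewrite nth_set_nth /= !nth_cars_below_config; case: eqP => [->|ne].
  have es : s.-1.+1 = s by lia.
  by rewrite es hFs ltnSn andbT; case: ltnP => //; lia.
by case: (ltnP m n) => //= hm; case: ltnP => h1; case: ltnP => h2 //; have := @hFj m.+1; lia.
Qed.

Lemma park_weight_config L :
  available G n (cars_below j (config n F)) j s -> L < s ->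
  (L = 0 \/ available G n (cars_below j (config n F)) j L) ->
  (forall k, L < k < s -> ~~ available G n (cars_below j (config n F)) j k) ->
  park_weight G n (config n F) j = s - L.
Proof.
move=> avs hL avL notav; rewrite /park_weight.
under eq_bigr => x _ do rewrite park_car_configE.
by apply: count_first_at => //; case/andP: hs.
Qed.

End ConfigWeight.

Section ParkingInvariant.
Variables (G : rel nat) (n : nat).
Hypothesis symG : symmetric G.

Definition parking_inv (j : nat) (occ : seq (option nat)) : Prop :=
  [/\ size occ = n,
      forall k c, nth None occ k = Some c -> 0 < c < j,
      forall k1 k2 c, nth None occ k1 = Some c -> nth None occ k2 = Some c -> k1 = k2,
      forall k a b, nth None occ k = Some a -> nth None occ k.+1 = Some b -> G a b
    & count_mem None occ + j = n.+1].

Lemma parking_inv_nseq : parking_inv 1 (nseq n None).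
Proof.
split=> [|k c|k1 k2 c|k a b|]; rewrite ?nth_nseq ?size_nseq //; try by case: ifP.
by rewrite count_nseq /= mul1n addn1.
Qed.

Lemma count_None_gt0 (occ : seq (option nat)) k :
  k < size occ -> nth None occ k = None -> 0 < count_mem None occ.
Proof. by move=> hk hnone; rewrite -has_count has_pred1 -hnone mem_nth. Qed.

Lemma parking_inv_park j occ q o : parking_inv j occ -> 0 < j <= n ->
  park_car G n occ j q = Some o -> parking_inv j.+1 o.
Proof.
move=> [hs hval hinj hadj hcnt] hj /park_carP [k].
move=> /and4P [hk /eqP hnone okl okr] [_ ->].
have hk' : k.-1 < size occ by lia.
split.
- by rewrite size_set_nth; lia.
- move=> m c; rewrite nth_set_nth /=; case: eqP => [_ [<-]|_ /hval]; lia.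
- move=> k1 k2 c; rewrite !nth_set_nth /=.
  case: eqP => [->|_]; case: eqP => [->|_] //; last exact: hinj.
    by move=> [<-] /hval; lia.
  by move=> /hval + [eqc]; lia.
- move=> m a b; rewrite !nth_set_nth /=.
  case: eqP => [->|_]; case: eqP => [|_]; [lia| | |exact: hadj].
    move=> [<-] hb; move: okr; rewrite /spot_ok (_ : k.+1.-1 = k.-1.+1); last lia.
    have hkn : k.-1.+1 < size occ by case: ltnP hb => // /(nth_default None) ->.
    by rewrite hb; case/or3P => //; lia.
  move=> mk ha [<-]; move: okl; rewrite /spot_ok (_ : k.-1.-1 = m); last lia.
  by rewrite ha symG; case/or3P => //; lia.
- rewrite count_set_nth_ltn // hnone /=.
  by move: (count_None_gt0 hk' hnone) hcnt; move: (count_mem None occ) => c; lia.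
Qed.

Lemma parking_inv_run s j occ f : parking_inv j occ -> 0 < j -> j + size s <= n.+1 ->
  run_from G n occ j s = Some f -> parking_inv (j + size s) f.
Proof.
elim: s j occ => [|q s IH] j occ hinv hj /= hjs; first by case=> <-; rewrite addn0.
case E: park_car => [o|] //= ho; rewrite -addSnnS.
have hinv' : parking_inv j.+1 o by apply: parking_inv_park E => //; lia.
by apply: IH ho => //; lia.
Qed.

Lemma parking_inv_full f : parking_inv n.+1 f -> forall k, k < n -> exists c, nth None f k = Some c.
Proof.
move=> [hs _ _ _ hcnt] k hk; case E: (nth None f k) => [c|]; first by exists c.
have hkf : k < size f by rewrite hs.
by have := count_None_gt0 hkf E; lia.
Qed.

Lemma parking_inv_config f F : parking_inv n.+1 f ->
  (forall m c, m.+3 <= n -> G (F m.+2) c -> c <> F m.+1 -> 0 < c <= n -> c = F m.+3) ->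
  nth None f 0 = Some (F 1) -> (1 < n -> nth None f 1 = Some (F 2)) ->
  f = config n F.
Proof.
move=> hinv hnext h0 h1; have [hs hval hinj hadj _] := hinv.
suff hpair : forall k, k.+1 < n ->
    nth None f k = Some (F k.+1) /\ nth None f k.+1 = Some (F k.+2).
  apply: (@eq_from_nth _ None) => [|k hk]; rewrite ?size_config // nth_config -hs hk.
  by case: k hk => [//|k]; rewrite hs => /hpair [].
elim=> [|k IH] hk; first by split => //; apply: h1.
have [e1 e2] := IH (ltnW hk); split => //.
have [c ec] := parking_inv_full hinv hk; rewrite ec; congr Some.
apply: hnext; [lia | exact: hadj e2 ec | move=> eqc | by have := hval _ _ ec; lia].
by subst c; have := hinj _ _ _ e1 ec; lia.
Qed.

End ParkingInvariant.

Lemma cycle_adjC n : symmetric (cycle_adj n).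
Proof. by move=> a b; rewrite /cycle_adj; apply/idP/idP; lia. Qed.

(* The car in spot k when car a (resp. b) is in spot 1 and the cars follow C_n
   upwards (resp. downwards). *)
Definition cw_car n a k := if k + a <= n.+1 then k + a - 1 else k + a - 1 - n.
Definition ccw_car n b k := if k <= b then b.+1 - k else b + n.+1 - k.

Ltac cycle_lia := rewrite ?available_configE /cycle_adj /cw_car /ccw_car;
  repeat match goal with |- context [if _ then _ else _] => case: ifP => ? end; lia.

Lemma cw_car_range n a k : 0 < a <= n -> 0 < k <= n -> 0 < cw_car n a k <= n.
Proof. by move=> ha hk; cycle_lia. Qed.

Lemma ccw_car_range n b k : 0 < b <= n -> 0 < k <= n -> 0 < ccw_car n b k <= n.
Proof. by move=> hb hk; cycle_lia. Qed.

Lemma cw_car_next n a m c : 3 <= n -> 0 < a <= n -> m.+3 <= n ->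
  cycle_adj n (cw_car n a m.+2) c -> c <> cw_car n a m.+1 -> 0 < c <= n -> c = cw_car n a m.+3.
Proof. by move=> hn ha hm; cycle_lia. Qed.

Lemma ccw_car_next n b m c : 3 <= n -> 0 < b <= n -> m.+3 <= n ->
  cycle_adj n (ccw_car n b m.+2) c -> c <> ccw_car n b m.+1 -> 0 < c <= n -> c = ccw_car n b m.+3.
Proof. by move=> hn hb hm; cycle_lia. Qed.

Lemma full_cycle_config n f : 3 <= n -> parking_inv (cycle_adj n) n n.+1 f ->
  exists2 a, 0 < a <= n & f = config n (cw_car n a) \/ f = config n (ccw_car n a).
Proof.
move=> hn hinv; have [_ hval _ hadj _] := hinv.
have [a ea] := parking_inv_full hinv (ltn_trans (isT : 0 < 2) hn).
have [b eb] := parking_inv_full hinv (ltn_trans (isT : 1 < 2) hn).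
have hab := hadj _ _ _ ea eb; have := hval _ _ eb; have := hval _ _ ea => ha hb.
have {}ha : 0 < a <= n by lia.
exists a => //.
have [eqb|eqb] : b = cw_car n a 2 \/ b = ccw_car n a 2 by move: hab; cycle_lia.
- left; apply: parking_inv_config hinv _ _ _ => [m c||]; first exact: cw_car_next.
    by rewrite ea; congr Some; cycle_lia.
  by rewrite eb eqb.
- right; apply: parking_inv_config hinv _ _ _ => [m c||]; first exact: ccw_car_next.
    by rewrite ea; congr Some; cycle_lia.
  by rewrite eb eqb.
Qed.

Definition cycle_outcomes n : seq (seq (option nat)) :=
  [seq config n (cw_car n a) | a <- iota 1 n] ++ [seq config n (ccw_car n b) | b <- iota 1 n].

Lemma run_cycle_outcome n s f : 3 <= n -> size s = n ->
  run_from (cycle_adj n) n (nseq n None) 1 s = Some f -> f \in cycle_outcomes n.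
Proof.
move=> hn hs hrun.
have hinv : parking_inv (cycle_adj n) n n.+1 f.
  have := parking_inv_run (@cycle_adjC n) (@parking_inv_nseq (cycle_adj n) n) _ _ hrun.
  by rewrite hs add1n; apply.
have [a ha [->|->]] := full_cycle_config hn hinv; rewrite mem_cat; apply/orP;
  [left | right]; apply: map_f; rewrite mem_iota; lia.
Qed.

Lemma uniq_cycle_outcomes n : 3 <= n -> uniq (cycle_outcomes n).
Proof.
move=> hn; rewrite cat_uniq !map_inj_in_uniq ?iota_uniq ?andbT //=.
- apply/hasP => -[_ /mapP [b hb ->] /mapP [a ha /config_inj eqab]].
  by move: ha hb; rewrite !mem_iota; have := eqab 1; have := eqab 2; cycle_lia.
- by move=> a b; rewrite !mem_iota => ha hb /config_inj eqab; have := eqab 1; cycle_lia.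
- by move=> a b; rewrite !mem_iota => ha hb /config_inj eqab; have := eqab 1; cycle_lia.
Qed.

Lemma card_FPF_cycle n : 3 <= n ->
  #|FPF (cycle_adj n) n| =
    \sum_(1 <= a < n.+1) \prod_(1 <= j < n.+1) park_weight (cycle_adj n) n (config n (cw_car n a)) j
  + \sum_(1 <= b < n.+1) \prod_(1 <= j < n.+1) park_weight (cycle_adj n) n (config n (ccw_car n b)) j.
Proof.
move=> hn; rewrite card_FPF_run.
rewrite (eq_bigr (fun t : n.-tuple 'I_n => \sum_(f <- cycle_outcomes n)
  (run_from (cycle_adj n) n (nseq n None) 1 (map (@pref_val n) t) == Some f : nat))) => [|t _].
  2: apply: option_indicator_sum (uniq_cycle_outcomes hn) _ => f.
  2: by apply: run_cycle_outcome; rewrite // size_map size_tuple.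
rewrite exchange_big big_cat !big_map /=.
have -> : iota 1 n = index_iota 1 n.+1 by rewrite /index_iota subn1.
congr (_ + _); apply: eq_big_seq => a; rewrite mem_iota => ha;
  apply: count_run_config => k hk; [apply: cw_car_range | apply: ccw_car_range]; lia.
Qed.

Definition head_weight j := if j == 1 then 1 else if j == 2 then 2 else j.+1.
Definition cw_weight a j := if j < a then head_weight j else (j - a).+1.
Definition ccw_weight n b j :=
  if b < j then (if j == n then b.+1 else if j == n.-1 then b.+2 else 1) else 1.

(* [weight_by s L]: car j parks in spot s, and L is the nearest spot below s available to it. *)
Ltac weight_by spot prev :=
  rewrite (park_weight_config (s := spot) _ _ _ (L := prev)); try move=> k hk; cycle_lia.

Lemma park_weight_cw n a j : 3 <= n -> 0 < a <= n -> 0 < j <= n ->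
  park_weight (cycle_adj n) n (config n (cw_car n a)) j = cw_weight a j.
Proof.
move=> hn ha hj; rewrite /cw_weight /head_weight.
case: ltnP => [ja|aj]; last by weight_by (j - a).+1 0.
case: eqP => [->|j1]; first by weight_by (n - a).+2 (n - a).+1.
case: eqP => [->|j2]; first by weight_by (n - a).+3 (n - a).+1.
(* Spot n - a + 1 is blocked: its right neighbour holds car 1, no friend of j. *)
by weight_by ((j + n).+1 - a) (n - a).
Qed.

Lemma park_weight_ccw n b j : 4 <= n -> 0 < b <= n -> 0 < j <= n ->
  park_weight (cycle_adj n) n (config n (ccw_car n b)) j = ccw_weight n b j.
Proof.
move=> hn hb hj; rewrite /ccw_weight.
case: ltnP => [bj|jb]; last by weight_by (b.+1 - j) (b - j).
case: eqP => [->|jn]; first by weight_by b.+1 0.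
case: eqP => [->|jn1]; first by weight_by b.+2 0.
by weight_by ((b + n).+1 - j) (b + n - j).
Qed.

Definition head_weight_prod a := \prod_(1 <= j < a) head_weight j.

Lemma head_weight_prod_small a : 0 < a < 4 -> head_weight_prod a = (a.-1)`!.
Proof. by case: a => [|[|[|[|a]]]] // _; rewrite /head_weight_prod /index_iota /= ?big_cons big_nil. Qed.

Lemma head_weight_prod_fact a : 3 <= a -> 3 * head_weight_prod a = a`!.
Proof.
elim: a => [//|a IH] ha; have [a2|a3] := leqP a 2.
  by rewrite (_ : a = 2) ?head_weight_prod_small //; lia.
rewrite /head_weight_prod big_nat_recr /=; last lia.
rewrite -/(head_weight_prod a) mulnA IH // factS mulnC /head_weight.
by case: eqP => [?|_]; [lia | case: eqP => [?|_] //; lia].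
Qed.

Lemma prod_park_weight_cw n a : 3 <= n -> 0 < a <= n ->
  \prod_(1 <= j < n.+1) park_weight (cycle_adj n) n (config n (cw_car n a)) j =
  head_weight_prod a * (n.+1 - a)`!.
Proof.
move=> hn ha; rewrite (eq_big_nat _ _ (fun j (hj : 1 <= j < n.+1) => park_weight_cw hn ha hj)).
rewrite (@big_cat_nat _ _ _ a) /= ?(ltnW (ltnSn n)); [congr (_ * _) | lia | lia].
  by apply: eq_big_nat => j /andP [_ hj]; rewrite /cw_weight hj.
rewrite fact_prod -{1}[a]add0n big_addn big_add1 /=.
by apply: eq_bigr => i _; rewrite /cw_weight ltnNge leq_addl /= addnK.
Qed.

Lemma prod_park_weight_ccw n b : 4 <= n -> 0 < b <= n ->
  \prod_(1 <= j < n.+1) park_weight (cycle_adj n) n (config n (ccw_car n b)) j =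
  ccw_weight n b n.-1 * ccw_weight n b n.
Proof.
move=> hn hb; rewrite (eq_big_nat _ _ (fun j (hj : 1 <= j < n.+1) => park_weight_ccw hn hb hj)).
case: n hn hb => [//|m] hm hb.
rewrite big_nat_recr /=; last lia.
rewrite big_nat_recr /=; last lia.
rewrite big_nat_cond big1 ?mul1n // => j /andP [hj _]; rewrite /ccw_weight /=.
by case: ifP => // _; rewrite !ifN_eq //; lia.
Qed.

Lemma sum_ccw_weight_ends n : 4 <= n ->
  \sum_(1 <= b < n.+1) ccw_weight n b n.-1 * ccw_weight n b n =
  n.+1 + \sum_(1 <= i < n.-1) i.+1 * i.+2.
Proof.
case: n => [//|m] hm; rewrite big_nat_recr /=; last lia.
rewrite big_nat_recr /=; last lia.
have -> : ccw_weight m.+1 m.+1 m * ccw_weight m.+1 m.+1 m.+1 = 1.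
  by rewrite /ccw_weight ltnn ltnNge leqnSn.
have -> : ccw_weight m.+1 m m * ccw_weight m.+1 m m.+1 = m.+1.
  by rewrite /ccw_weight ltnn ltnSn eqxx mul1n.
rewrite (eq_big_nat _ _ (_ : forall i, 1 <= i < m -> _ = i.+1 * i.+2)) => [|i /andP [_ im]].
  by rewrite addn1 addnC.
have im1 : i < m.+1 by lia.
rewrite /ccw_weight im im1 eqxx ifN_eq; last lia.
by rewrite /= eqxx mulnC.
Qed.

Lemma sum_head_weight_prod n : 4 <= n ->
  \sum_(1 <= a < n.+1) head_weight_prod a * (n.+1 - a)`! =
  \sum_(1 <= i < 4) ((n.+1 - i)`! * (i.-1)`!) + \sum_(4 <= i < n.+1) (((n - i).+1)`! * i`!) %/ 3.
Proof.
move=> hn; rewrite (@big_cat_nat _ _ _ 4) //=; last lia.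
congr (_ + _); apply: eq_big_nat => i hi.
  by rewrite head_weight_prod_small // mulnC.
case/andP: hi => hi4 hin; rewrite (_ : (n - i).+1 = n.+1 - i); last lia.
by rewrite -(head_weight_prod_fact (ltnW hi4)) mulnCA mulKn // mulnC.
Qed.

Theorem theorem2p10 (n : nat) : 4 <= n ->
  #|FPF (cycle_adj n) n| =
    n.+1
    + \sum_(1 <= i < n.-1) (i.+1 * i.+2)
    + \sum_(1 <= i < 4) ((n.+1 - i)`! * (i.-1)`!)
    + \sum_(4 <= i < n.+1) (((n - i).+1)`! * i`!) %/ 3.
Proof.
move=> hn; have hn3 : 3 <= n by lia.
rewrite card_FPF_cycle //.
rewrite (eq_big_nat _ _ (fun a (ha : 1 <= a < n.+1) => prod_park_weight_cw hn3 ha)).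
rewrite (eq_big_nat _ _ (fun b (hb : 1 <= b < n.+1) => prod_park_weight_ccw hn hb)).
rewrite sum_head_weight_prod // sum_ccw_weight_ends //; lia.
Qed.
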